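(* Let $F\in\mathrm{GL}^+(2)$ and $H\in\mathbb{R}^{2\times2}$ such that $\operatorname{rank}(H)=1$ and $F+H\in\mathrm{GL}^+(2)$. Then there exists at most one $t\in[0,1]$ such that $F+tH$ has non-simple singular values (i.e. its two singular values coincide).
   Context: $\mathrm{GL}^+(2)$ is the group of real invertible $2\times2$ matrices with positive determinant. *)

From mathcomp Require Import all_boot all_order all_algebra.
From mathcomp Require Import reals.
Set Implicit Arguments. Unset Strict Implicit. Unset Printing Implicit Defensive.
Import Order.TTheory GRing.Theory Num.Theory.
Local Open Scope ring_scope.

Definition GLplus (R : realType) (n : nat) (A : 'M[R]_n) : Prop := 0 < \det A.

Definition orthogonal_mx (R : realType) (n : nat) (Q : 'M[R]_n) : Prop :=
  Q^T *m Q = 1%:M.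

Definition singular_values2 (R : realType) (A : 'M[R]_2) (s1 s2 : R) : Prop :=
  s2 <= s1 /\ 0 <= s2 /\
  exists U V : 'M[R]_2, orthogonal_mx U /\ orthogonal_mx V /\
    A = U *m diag_mx (\row_(i < 2) (if i == 0 :> 'I_2 then s1 else s2)) *m V^T.

Definition nonsimple_singular_values (R : realType) (A : 'M[R]_2) : Prop :=
  exists s1 s2 : R, singular_values2 A s1 s2 /\ s1 = s2.

From mathcomp Require Import all_boot all_order all_algebra.
From mathcomp Require Import reals ring lra.
Set Implicit Arguments. Unset Strict Implicit. Unset Printing Implicit Defensive.
Import Order.TTheory GRing.Theory Num.Theory.
Local Open Scope ring_scope.

(* Equal singular values and positive determinant make A a positive multiple of
   a rotation, i.e. a conformal matrix [[a, -b], [b, a]]; these form a linear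
   subspace.  Since rank H = 1, det H = 0 and det (F + t H) is affine in t, hence
   positive on [0, 1].  If F + t1 H and F + t2 H were both conformal with
   t1 <> t2, their difference would make H conformal, but a conformal matrix has
   determinant a^2 + b^2, so det H = 0 would force H = 0. *)

Lemma ord2_cases (i : 'I_2) : i = 0 \/ i = 1.
Proof. by case: i => [[|[|//]] ?]; [left | right]; apply/val_inj. Qed.

Definition conformal_mx (R : pzRingType) (A : 'M[R]_2) : Prop :=
  A 0 0 = A 1 1 /\ A 0 1 = - A 1 0.

Lemma det_mx22 (R : comNzRingType) (A : 'M[R]_2) :
  \det A = A 0 0 * A 1 1 - A 0 1 * A 1 0.
Proof.
rewrite (expand_det_row _ 0) !big_ord_recl big_ord0 /cofactor !det_mx11 !mxE /=.
have -> : (lift 0 0 : 'I_2) = 1 by exact/val_inj.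
have -> : (lift 1 0 : 'I_2) = 0 by exact/val_inj.
have -> : (ord0 : 'I_2) = 0 by exact/val_inj.
by rewrite /= expr0 expr1; ring.
Qed.

Lemma det_rank_lt (R : fieldType) n (A : 'M[R]_n) : (\rank A < n)%N -> \det A = 0.
Proof.
move=> ltAn; apply/eqP; rewrite -[_ == 0]negbK -unitfE -unitmxE -row_free_unit.
by rewrite /row_free ltn_eqF.
Qed.

Lemma det_lineD (R : comNzRingType) (A B : 'M[R]_2) (t : R) :
  \det (A + t *: B) = (1 - t) * \det A + t * \det (A + B) + (t ^+ 2 - t) * \det B.
Proof. by rewrite !det_mx22 !mxE; ring. Qed.

Lemma det_segment_gt0 (R : realFieldType) (A B : 'M[R]_2) (t : R) :
  0 < \det A -> 0 < \det (A + B) -> \det B = 0 -> 0 <= t <= 1 ->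
  0 < \det (A + t *: B).
Proof.
move=> dA dAB dB /andP[t_ge0 t_le1].
rewrite det_lineD dB mulr0 addr0.
have : 0 <= (1 - t) * \det A by apply: mulr_ge0; lra.
have : 0 <= t * \det (A + B) by apply: mulr_ge0; lra.
have : 0 < (1 - t) * \det A \/ 0 < t * \det (A + B).
  by case: (ltrP t 1) => ?; [left | right]; apply: mulr_gt0; lra.
lra.
Qed.

Lemma conformal_mxZ (R : comPzRingType) (s : R) (A : 'M[R]_2) :
  conformal_mx A -> conformal_mx (s *: A).
Proof. by rewrite /conformal_mx !mxE => -[-> ->]; rewrite mulrN. Qed.

Lemma conformal_mxB (R : pzRingType) (A B : 'M[R]_2) :
  conformal_mx A -> conformal_mx B -> conformal_mx (A - B).
Proof.
rewrite /conformal_mx !mxE => -[-> ->] [-> ->].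
by split=> //; rewrite opprB opprK addrC.
Qed.

Lemma conformal_mx_dir (R : fieldType) (A B : 'M[R]_2) (t1 t2 : R) :
  t1 != t2 -> conformal_mx (A + t1 *: B) -> conformal_mx (A + t2 *: B) ->
  conformal_mx B.
Proof.
move=> t12 c1 c2.
have -> : B = (t1 - t2)^-1 *: ((A + t1 *: B) - (A + t2 *: B)).
  by rewrite opprD addrACA subrr add0r -scalerBl scalerA mulVf ?scale1r // subr_eq0.
exact/conformal_mxZ/conformal_mxB.
Qed.

Lemma conformal_mx_det (R : comNzRingType) (A : 'M[R]_2) :
  conformal_mx A -> \det A = A 1 1 ^+ 2 + A 1 0 ^+ 2.
Proof. by rewrite det_mx22 => -[-> ->]; ring. Qed.

Lemma conformal_mx_det_eq0 (R : realDomainType) (A : 'M[R]_2) :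
  conformal_mx A -> \det A = 0 -> A = 0.
Proof.
move=> cA; rewrite conformal_mx_det // => /eqP.
rewrite paddr_eq0 ?sqr_ge0 // !sqrf_eq0 => /andP[/eqP A11 /eqP A10].
case: cA; rewrite A11 A10 oppr0 => A00 A01.
apply/matrixP => i j; rewrite mxE.
by case: (ord2_cases i) => ->; case: (ord2_cases j) => ->.
Qed.

Lemma orthogonal_mx_tr (R : realType) n (Q : 'M[R]_n) :
  orthogonal_mx Q -> orthogonal_mx Q^T.
Proof. by rewrite /orthogonal_mx trmxK => /mulmx1C. Qed.

Lemma orthogonal_mxM (R : realType) n (P Q : 'M[R]_n) :
  orthogonal_mx P -> orthogonal_mx Q -> orthogonal_mx (P *m Q).
Proof.
rewrite /orthogonal_mx trmx_mul => oP oQ.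
by rewrite mulmxA -(mulmxA Q^T) oP mulmx1 oQ.
Qed.

Lemma orthogonal_mx_det_sqr (R : realType) n (Q : 'M[R]_n) :
  orthogonal_mx Q -> \det Q ^+ 2 = 1.
Proof. by move=> oQ; rewrite expr2 -{1}det_tr -det_mulmx oQ det1. Qed.

Lemma rotation_conformal_mx (R : realType) (W : 'M[R]_2) :
  orthogonal_mx W -> 0 < \det W -> conformal_mx W.
Proof.
move=> oW dW_gt0.
have dW1 : \det W = 1.
  move/eqP: (orthogonal_mx_det_sqr oW); rewrite sqrf_eq1 => /orP[/eqP // | /eqP dWN1].
  by rewrite dWN1 in dW_gt0; lra.
have WTW i j : (W^T *m W) i j = W 0 i * W 0 j + W 1 i * W 1 j.
  by rewrite mxE big_ord_recr big_ord1 !mxE; congr (W _ _ * W _ _ + W _ _ * W _ _);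
    apply/val_inj.
have col0 : W 0 0 ^+ 2 + W 1 0 ^+ 2 = 1 by rewrite !expr2 -WTW oW mxE.
have col1 : W 0 1 ^+ 2 + W 1 1 ^+ 2 = 1 by rewrite !expr2 -WTW oW mxE.
have : (W 0 0 - W 1 1) ^+ 2 + (W 0 1 + W 1 0) ^+ 2 = 0.
  have -> : (W 0 0 - W 1 1) ^+ 2 + (W 0 1 + W 1 0) ^+ 2 =
      (W 0 0 ^+ 2 + W 1 0 ^+ 2) + (W 0 1 ^+ 2 + W 1 1 ^+ 2) - 2 * \det W.
    by rewrite det_mx22; ring.
  by rewrite col0 col1 dW1; ring.
move/eqP; rewrite paddr_eq0 ?sqr_ge0 // !sqrf_eq0 subr_eq0 addr_eq0.
by move=> /andP[/eqP ? /eqP ?].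
Qed.

Lemma nonsimple_singular_values_conformal_mx (R : realType) (A : 'M[R]_2) :
  0 < \det A -> nonsimple_singular_values A -> conformal_mx A.
Proof.
move=> dA_gt0 [s [s' [[_ [_ [U [V [oU [oV eA]]]]]] ss']]]; subst s'.
have diag_s : diag_mx (\row_(i < 2) (if i == 0 then s else s)) = s%:M.
  by rewrite -diag_const_mx; congr diag_mx; apply/matrixP => i j; rewrite !mxE if_same.
rewrite diag_s mul_mx_scalar -scalemxAl in eA; rewrite eA detZ in dA_gt0 *.
apply/conformal_mxZ/rotation_conformal_mx; first exact/orthogonal_mxM/orthogonal_mx_tr.
by have := sqr_ge0 s; nra.
Qed.

Theorem corollary3p10 (R : realType) (F H : 'M[R]_2) :
  GLplus F -> \rank H = 1%N -> GLplus (F + H) ->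
  forall t1 t2 : R,
    0 <= t1 <= 1 -> 0 <= t2 <= 1 ->
    nonsimple_singular_values (F + t1 *: H) ->
    nonsimple_singular_values (F + t2 *: H) ->
    t1 = t2.
Proof.
move=> dF_gt0 rankH dFH_gt0 t1 t2 t1_01 t2_01 ns1 ns2.
have dH : \det H = 0 by apply: det_rank_lt; rewrite rankH.
have conformal_on_segment t : 0 <= t <= 1 ->
    nonsimple_singular_values (F + t *: H) -> conformal_mx (F + t *: H).
  by move=> t01; apply: nonsimple_singular_values_conformal_mx; apply: det_segment_gt0.
apply/eqP; apply: contraT => t12.
have H0 : H = 0.
  apply: conformal_mx_det_eq0 dH; apply: (conformal_mx_dir t12).
  - exact: conformal_on_segment t1_01 ns1.
  - exact: conformal_on_segment t2_01 ns2.
by move: rankH; rewrite H0 mxrank0.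
Qed.
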